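(* Let $F=\breve F(\alpha_1,\dots,\alpha_t)$ be a fence. (1) If $x,y\in\breve S_i$ for some $i\in[t]$, then $\chi_x-\chi_y\equiv 0$. (2) If $\alpha_i=2$ for all $i\in[t]$, then $\chi\equiv t/2$, where $\chi=\sum_{q\in F}\chi_q$.
   Context: Fences: let $\alpha=(\alpha_1,\dots,\alpha_t)$ be positive integers with $t\ge2$ and $\alpha_1,\alpha_t\ge2$. Put $a_0=0$, $a_i=\alpha_1+\dots+\alpha_i$, $n=a_t-1$. The fence $\breve F(\alpha)$ is the poset on $\{x_1,\dots,x_n\}$ whose cover relations are: for $1\le j\le n-1$ with $a_{i-1}\le j<a_i$, $x_j\lessdot x_{j+1}$ if $i$ is odd and $x_j\gtrdot x_{j+1}$ if $i$ is even. Segments: $S_1=\{x_j:1\le j\le a_1\}$, $S_i=\{x_j:a_{i-1}\le j\le a_i\}$ for $2\le i\le t-1$, $S_t=\{x_j:a_{t-1}\le j\le n\}$. Shared elements are $x_{a_i}$, $i\in[t-1]$; $\breve S_i$ is the set of non-shared elements of $S_i$. $\mathcal J(F)$ is the set of order ideals. For $q\in F$, $I\in\mathcal J(F)$: $\chi_q(I)=1$ if $q\in\max(I)$, else $0$; $T_q(I)=1$ if $q\in\min(F\setminus I)$, $-1$ if $q\in\max(I)$, $0$ otherwise. For functions $f,g:\mathcal J(F)\to\mathbb R$, $f\equiv g$ means $f-g=\sum_{q\in F}c_qT_q$ for some real constants $c_q$; a real number $c$ also denotes the constant function $c$. *)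

From HB Require Import structures.
From mathcomp Require Import all_boot all_order all_algebra.
From mathcomp Require Import reals.
Set Implicit Arguments. Unset Strict Implicit. Unset Printing Implicit Defensive.
Import Order.TTheory GRing.Theory Num.Theory.

(* Fences  F(alpha),  alpha = [:: alpha_1; ...; alpha_t].
   Element x_j (1 <= j <= n) is represented by k : 'I_n with j = k + 1. *)

Section Fence.
Variable alpha : seq nat.

Definition fa (i : nat) : nat := \sum_(k < i) nth 0 alpha k.
Definition ft : nat := size alpha.
Definition fn : nat := (fa ft).-1.

(* the segment index i with a_{i-1} <= j < a_i  (for 1 <= j < a_t) *)
Definition segidx (j : nat) : nat := (count (fun m => fa m <= j) (iota 1 ft)).+1.

Definition fcover : rel 'I_fn := fun u v =>
  ((val v == (val u).+1) && odd (segidx (val u).+1))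
  || ((val u == (val v).+1) && ~~ odd (segidx (val v).+1)).

Definition fle (u v : 'I_fn) : bool := connect fcover u v.
Definition flt (u v : 'I_fn) : bool := (u != v) && fle u v.

Definition is_ideal (I : {set 'I_fn}) : Prop :=
  forall u v : 'I_fn, fle u v -> v \in I -> u \in I.

Definition in_max (I : {set 'I_fn}) (q : 'I_fn) : bool :=
  (q \in I) && [forall p, flt q p ==> (p \notin I)].
Definition in_min_compl (I : {set 'I_fn}) (q : 'I_fn) : bool :=
  (q \notin I) && [forall p, flt p q ==> (p \in I)].

Variable R : realType.
Local Open Scope ring_scope.

Definition chi (q : 'I_fn) (I : {set 'I_fn}) : R :=
  if in_max I q then 1 else 0.
Definition Tq (q : 'I_fn) (I : {set 'I_fn}) : R :=
  if in_min_compl I q then 1 else if in_max I q then -1 else 0.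

Definition fequiv (f g : {set 'I_fn} -> R) : Prop :=
  exists c : 'I_fn -> R, forall I, is_ideal I ->
    f I - g I = \sum_(q : 'I_fn) c q * Tq q I.

Definition chi_total (I : {set 'I_fn}) : R := \sum_(q : 'I_fn) chi q I.

End Fence.

Definition in_seg (alpha : seq nat) (i j : nat) : bool :=
  (fa alpha i.-1 <= j) && (j <= fa alpha i).
(* x_j is a non-shared element of S_i, i.e. x_j \in breve S_i *)
Definition in_bseg (alpha : seq nat) (i j : nat) : bool :=
  in_seg alpha i j && all (fun m => j != fa alpha m) (iota 1 (ft alpha).-1).

From Pilot Require Import Defs.
From HB Require Import structures.
From mathcomp Require Import all_boot all_order all_algebra.
From mathcomp Require Import reals.
From mathcomp Require Import zify lra.
Set Implicit Arguments. Unset Strict Implicit. Unset Printing Implicit Defensive.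
Import Order.TTheory GRing.Theory Num.Theory.

(* Within one segment the fence is a chain, so for consecutive elements
   [u < v] there, [u] is maximal in an ideal [I] exactly when [v] is minimal in its
   complement.  Hence [chi_u - chi_v] is [T_v] (or [-T_u] on a descending segment), and
   chaining along the segment gives [chi_x ≡ chi_y].

   When every [alpha_i = 2] the fence is the zigzag
   [x_1 < x_2 > x_3 > x_4 < x_5 < x_6 > ...] of period 4.  Take [c_q = 0] on peaks,
   [-1] on valleys and [-1/2] elsewhere.  Then [chi_q - c_q T_q] is [[q in I]] on a peak,
   [[q notin I]] on a valley, and half the difference of the memberships of its lower and
   upper neighbours on any other element.  Summed over the fence the neighbour terms cancel,
   leaving [1] per valley and [1/2] per end of the fence that is a minimal element, which
   totals [t/2]. *)

Lemma interval_equiv (T : Type) (e : T -> T -> Prop) (f : nat -> T) (lo hi : nat) :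
  (forall x, e x x) -> (forall x y, e x y -> e y x) ->
  (forall x y z, e x y -> e y z -> e x z) ->
  (forall k, (lo <= k < hi)%N -> e (f k) (f k.+1)) ->
  forall j k, (lo <= j <= hi)%N -> (lo <= k <= hi)%N -> e (f j) (f k).
Proof.
move=> e_refl e_sym e_trans step.
have e_up d j : (lo <= j)%N -> (j + d <= hi)%N -> e (f j) (f (j + d)).
  elim: d => [|d IH] lo_j hi_jd; first by rewrite addn0.
  apply: e_trans (IH lo_j _) _; first lia.
  by rewrite addnS; apply: step; lia.
move=> j k /andP[lo_j j_hi] /andP[lo_k k_hi]; case: (leqP j k) => [jk|kj].
  by rewrite -(subnKC jk); apply: e_up; lia.
by apply: e_sym; rewrite -(subnKC (ltnW kj)); apply: e_up; lia.
Qed.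

Lemma sum_dvdn_succ (S : pzSemiRingType) d m : (0 < d)%N ->
  (\sum_(0 <= k < m) (d %| k.+1)%:R = (m %/ d)%:R :> S)%R.
Proof.
move=> d_gt0; elim: m => [|m IH]; first by rewrite big_geq // div0n.
by rewrite big_nat_recr //= IH (divnS _ d_gt0) natrD addrC.
Qed.

Section Fence.
Variable alpha : seq nat.
Local Notation n := (fn alpha).
Local Notation fcover := (@fcover alpha).
Local Notation flt := (@flt alpha).
Local Notation fle := (@fle alpha).
Local Notation is_ideal := (@is_ideal alpha).

Definition ascends (k : nat) : bool := odd (segidx alpha k.+1).

Lemma fcoverE (u v : 'I_n) : fcover u v =
  ((v == u.+1 :> nat) && ascends u) || ((u == v.+1 :> nat) && ~~ ascends v).
Proof. by []. Qed.

Definition memn (I : {set 'I_n}) (k : nat) : bool := k \in map val (enum I).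

Lemma memnP (I : {set 'I_n}) k : reflect (exists2 r : 'I_n, r = k :> nat & r \in I) (memn I k).
Proof.
apply: (iffP mapP) => [[r rI ->]|[r <- rI]]; exists r => //; by rewrite mem_enum in rI *.
Qed.

Lemma memn_val (I : {set 'I_n}) (q : 'I_n) : memn I q = (q \in I).
Proof. by rewrite /memn (mem_map val_inj) mem_enum. Qed.

Lemma memn_out (I : {set 'I_n}) k : (n <= k)%N -> memn I k = false.
Proof. by move=> nk; apply/memnP => -[r rk _]; move: (ltn_ord r); rewrite rk ltnNge nk. Qed.

Lemma fcover_flt (u v : 'I_n) : fcover u v -> flt u v.
Proof.
move=> uv; rewrite /flt /fle connect1 // andbT.
by apply/eqP => eq_uv; move: uv; rewrite eq_uv fcoverE; lia.
Qed.

Lemma flt_first_cover (p q : 'I_n) : flt q p -> exists2 r, fcover q r & fle r p.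
Proof.
case/andP=> qp /connectP[[|r s] /= path_s last_s]; first by rewrite last_s eqxx in qp.
by case/andP: path_s => qr path_s; exists r => //; apply/connectP; exists s.
Qed.

Lemma flt_last_cover (p q : 'I_n) : flt p q -> exists2 r, fle p r & fcover r q.
Proof.
case/andP=> pq /connectP[s]; elim/last_ind: s => [|s r _] path_s last_s.
  by rewrite /= last_s eqxx in pq.
rewrite rcons_path in path_s; case/andP: path_s => path_s sr.
rewrite last_rcons in last_s; rewrite last_s.
by exists (last p s) => //; apply/connectP; exists s.
Qed.

Definition upper_cover_in (I : {set 'I_n}) (q : 'I_n) : bool :=
  [exists r, fcover q r && (r \in I)].
Definition lower_covers_in (I : {set 'I_n}) (q : 'I_n) : bool :=
  [forall p, fcover p q ==> (p \in I)].

Lemma in_max_covers (I : {set 'I_n}) q : is_ideal I ->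
  in_max I q = (q \in I) && ~~ upper_cover_in I q.
Proof.
move=> idI; congr (_ && _); apply/forallP/existsPn => above r.
- apply/nandP; case: (boolP (fcover q r)) => [qr|]; last by left.
  by right; apply: (implyP (above r)); apply: fcover_flt.
- apply/implyP => /flt_first_cover[s qs sr]; apply/negP => rI.
  by move: (above s); rewrite qs (idI _ _ sr rI).
Qed.

Lemma in_min_compl_covers (I : {set 'I_n}) q : is_ideal I ->
  in_min_compl I q = (q \notin I) && lower_covers_in I q.
Proof.
move=> idI; congr (_ && _); apply/forallP/forallP => below p; apply/implyP.
- by move=> /fcover_flt; apply/implyP.
- by case/flt_last_cover=> r pr rq; apply: idI pr (implyP (below r) rq).
Qed.

Lemma upper_cover_inE (I : {set 'I_n}) (q : 'I_n) : upper_cover_in I q =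
  (ascends q && memn I q.+1) || [&& 0 < q, ~~ ascends q.-1 & memn I q.-1]%N.
Proof.
apply/existsP/idP => [[r /andP[]]|].
- rewrite fcoverE -memn_val => /orP[/andP[/eqP-> ->] -> //|/andP[/eqP qr ur] rI].
  by rewrite qr /= ur rI orbT.
- case/orP=> [/andP[up /memnP[r rq rI]]|/and3P[q_gt0 down /memnP[r rq rI]]]; exists r.
    by rewrite fcoverE rq eqxx up.
  by rewrite fcoverE rq (prednK q_gt0) eqxx down orbT.
Qed.

Lemma lower_covers_inE (I : {set 'I_n}) (q : 'I_n) : lower_covers_in I q =
  ((q.+1 < n)%N && ~~ ascends q ==> memn I q.+1) &&
  ((0 < q)%N && ascends q.-1 ==> memn I q.-1).
Proof.
apply/forallP/andP => [below|[next prev] p].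
- split; apply/implyP.
    case/andP=> qn down; rewrite -[q.+1]/(Ordinal qn : nat) memn_val.
    by apply: (implyP (below _)); rewrite fcoverE eqxx down orbT.
  case/andP=> q_gt0 up; have qn : (q.-1 < n)%N by rewrite prednK // ltnW.
  rewrite -[q.-1]/(Ordinal qn : nat) memn_val; apply: (implyP (below _)).
  by rewrite fcoverE /= prednK // eqxx up.
- rewrite fcoverE -memn_val; apply/implyP => /orP[/andP[/eqP qp up]|/andP[/eqP pq down]].
    by move: prev; rewrite qp /= up.
  by move: next; rewrite -pq ltn_ord down.
Qed.

(* In a monotone stretch of the fence [u] and [v] are each other's only cover on that side,
   so the lower one is maximal in [I] exactly when the upper one is minimal outside [I]. *)
Lemma in_max_next_in_min_compl I (u v : 'I_n) (o : bool) : is_ideal I -> v = u.+1 :> nat ->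
  (forall e, (u.-1 <= e <= v)%N -> ascends e = o) ->
  if o then in_max I u = in_min_compl I v else in_max I v = in_min_compl I u.
Proof.
move=> idI vu asc_o; have vn := ltn_ord v; rewrite vu in vn.
have [asc_prev asc_u asc_v] : [/\ ascends u.-1 = o, ascends u = o & ascends v = o].
  by split; apply: asc_o; rewrite vu; lia.
rewrite !in_max_covers ?in_min_compl_covers // upper_cover_inE lower_covers_inE.
rewrite upper_cover_inE lower_covers_inE -!memn_val vu /= asc_prev asc_u.
rewrite vu in asc_v; rewrite asc_v vn.
by case: o {asc_o asc_prev asc_u asc_v}; rewrite /= ?andbF ?orbF ?andbT andbC.
Qed.

Lemma fa_mono : {homo fa alpha : i j / (i <= j)%N}.
Proof.
move=> i j /subnK <-; elim: (j - i)%N => // d IH.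
by rewrite addSn /fa big_ord_recr /= (leq_trans IH) // leq_addr.
Qed.

Lemma segidx_seg i j : (1 <= i <= size alpha)%N -> (fa alpha i.-1 <= j < fa alpha i)%N ->
  segidx alpha j = i.
Proof.
move=> /andP[i_gt0 it] /andP[lo hi]; rewrite /segidx /ft.
rewrite -(subnKC (leq_trans (leq_pred i) it)) iotaD count_cat.
rewrite (@eq_in_count _ _ predT) ?count_predT ?size_iota; last first.
  by move=> m; rewrite mem_iota => /andP[_ lt_m]; apply: leq_trans lo; apply: fa_mono; lia.
rewrite (@eq_in_count _ _ pred0) ?count_pred0 ?addn0 ?prednK //.
move=> m; rewrite mem_iota => /andP[le_m _] /=; apply/negbTE; rewrite -ltnNge.
by apply: leq_trans hi _; apply: fa_mono; lia.
Qed.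

Lemma in_bseg_bounds i j : (1 <= i <= size alpha)%N -> (0 < j < fa alpha (size alpha))%N ->
  in_bseg alpha i j -> (fa alpha i.-1 < j < fa alpha i)%N.
Proof.
move=> /andP[i_gt0 it] jt /andP[/andP[lo hi] /allP unshared].
have unshared_at m : (1 <= m < size alpha)%N -> j != fa alpha m.
  by move=> m_range; apply: unshared; rewrite mem_iota /ft; lia.
rewrite !ltn_neqAle lo hi !andbT; apply/andP; split.
- case: (ltnP 1%N i) => [i_gt1|i_le1]; first by rewrite eq_sym unshared_at //; lia.
  by rewrite (_ : i.-1 = 0%N) /fa ?big_ord0; lia.
- case: (ltnP i (size alpha)) => [lt_it|le_ti]; first by rewrite unshared_at //; lia.
  by rewrite (_ : i = size alpha); lia.
Qed.

End Fence.

Section Toggles.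
Variables (alpha : seq nat) (R : realType).
Local Open Scope ring_scope.
Local Notation n := (fn alpha).
Local Notation is_ideal := (@is_ideal alpha).
Local Notation chi := (@chi alpha R).
Local Notation Tq := (@Tq alpha R).
Local Notation fequiv := (@fequiv alpha R).

Lemma chiE q I : chi q I = (in_max I q)%:R.
Proof. by rewrite /Defs.chi; case: (in_max I q). Qed.

Lemma TqE q I : Tq q I = (in_min_compl I q)%:R - (in_max I q)%:R.
Proof.
rewrite /Defs.Tq; case: (boolP (in_min_compl I q)) => [/andP[qI _]|_].
  by rewrite /in_max (negbTE qI) subr0.
by case: (in_max I q); rewrite /= ?mulr0n ?mulr1n ?sub0r ?oppr0.
Qed.

(* On an ideal, an upper cover in [I] forces [q] into [I], which forces all lower covers
   into [I]; so [in_max] and [in_min_compl] add up to [lower - upper]. *)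
Lemma chi_add_halfTq I q : is_ideal I ->
  chi q I + Tq q I / 2 = ((lower_covers_in I q)%:R - (upper_cover_in I q)%:R) / 2.
Proof.
move=> idI; rewrite chiE TqE in_max_covers // in_min_compl_covers //.
have up_in : upper_cover_in I q -> q \in I.
  by case/existsP=> r /andP[qr rI]; apply: idI rI; apply: connect1.
have in_low : q \in I -> lower_covers_in I q.
  by move=> qI; apply/forallP => p; apply/implyP => pq; apply: idI qI; apply: connect1.
move: up_in in_low; case: (q \in I); case: upper_cover_in; case: lower_covers_in => //= *; lra.
Qed.

Lemma fequiv_refl f : fequiv f f.
Proof. by exists (fun=> 0) => I _; rewrite subrr big1 // => q _; rewrite mul0r. Qed.

Lemma fequiv_sym f g : fequiv f g -> fequiv g f.
Proof.
case=> c fg; exists (fun q => - c q) => I idI.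
by rewrite -opprB fg // -sumrN; apply: eq_bigr => q _; rewrite mulNr.
Qed.

Lemma fequiv_trans f g h : fequiv f g -> fequiv g h -> fequiv f h.
Proof.
case=> c fg [d gh]; exists (fun q => c q + d q) => I idI.
rewrite -(subrKA (g I)) fg // gh // -big_split /=.
by apply: eq_bigr => q _; rewrite mulrDl.
Qed.

Lemma fequiv_Tq f g v : (forall I, is_ideal I -> f I - g I = Tq v I) -> fequiv f g.
Proof.
move=> fg; exists (fun q => (q == v)%:R) => I idI.
rewrite fg // (bigD1 v) //= eqxx mul1r big1 ?addr0 // => q /negbTE->; exact: mul0r.
Qed.

Lemma fequiv_sub0 f g : fequiv f g -> fequiv (fun I => f I - g I) (fun=> 0).
Proof. by case=> c fg; exists c => I idI; rewrite subr0 fg. Qed.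

Lemma fequiv_chi_next (u v : 'I_n) (o : bool) : v = u.+1 :> nat ->
  (forall e, (u.-1 <= e <= v)%N -> ascends alpha e = o) -> fequiv (chi u) (chi v).
Proof.
move=> vu asc_o; have ext I (idI : is_ideal I) := in_max_next_in_min_compl idI vu asc_o.
case: o {asc_o} ext => ext.
- by apply: (fequiv_Tq (v := v)) => I idI; rewrite TqE !chiE ext.
- by apply/fequiv_sym/(fequiv_Tq (v := u)) => I idI; rewrite TqE !chiE ext.
Qed.

Lemma fequiv_chi_bseg i (x y : 'I_n) : (1 <= i <= size alpha)%N ->
  in_bseg alpha i (val x).+1 -> in_bseg alpha i (val y).+1 -> fequiv (chi x) (chi y).
Proof.
move=> i_range x_in y_in.
have bounds (z : 'I_n) :
    in_bseg alpha i (val z).+1 -> (fa alpha i.-1 <= val z <= (fa alpha i).-2)%N.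
  move=> z_in; have := in_bseg_bounds i_range _ z_in; have := valP z.
  by move: (val z) => k; rewrite /fn /ft; lia.
have [x_b y_b] := (bounds x x_in, bounds y y_in).
have := @interval_equiv _ fequiv (fun k => chi (insubd x k)) _ _
  fequiv_refl (@fequiv_sym) (@fequiv_trans) _ (val x) (val y) x_b y_b.
rewrite !valKd; apply => k k_range.
have kn : (k.+1 < n)%N.
  by have := @fa_mono alpha i (size alpha); rewrite /fn /ft; lia.
apply: (@fequiv_chi_next _ _ (odd i)); rewrite !val_insubd ?kn ?(ltnW kn) //.
by move=> e e_range; rewrite /ascends (segidx_seg i_range); lia.
Qed.

End Toggles.

Section AllTwo.
Variables (alpha : seq nat) (R : realType).
Hypotheses (all2 : all (fun a => a == 2)%N alpha) (t_gt0 : (0 < size alpha)%N).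
Local Notation t := (size alpha).
Local Notation n := (fn alpha).

Lemma fa_all2 i : fa alpha i = (2 * minn i t)%N.
Proof.
elim: i => [|i IH]; first by rewrite /fa big_ord0 min0n.
rewrite /fa big_ord_recr /= -/(fa alpha i) IH.
case: (ltnP i t) => it; last by rewrite nth_default //; lia.
by rewrite (eqP (all_nthP 0 all2 i it)); lia.
Qed.

Lemma fn_all2 : n = (2 * t).-1.
Proof. by rewrite /fn fa_all2 /ft minnn. Qed.

Lemma ascends_all2 k : (k < n)%N -> ascends alpha k = (k %% 4 == 0)%N || (k %% 4 == 3)%N.
Proof.
by rewrite fn_all2 => kn; rewrite /ascends (@segidx_seg _ (k.+1 %/ 2).+1) ?fa_all2; lia.
Qed.

(* Membership of [x_j] (1-based), extended to the virtual ends [x_0] and [x_(n+1)]: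
   like every valley ([j = 0 mod 4]) they lie in all ideals, like every peak in none. *)
Definition xbit (I : {set 'I_n}) (j : nat) : bool :=
  if (0 < j <= n)%N then memn I j.-1 else (j %% 4 == 0)%N.

Lemma xbit_mem I k : (k < n)%N -> xbit I k.+1 = memn I k.
Proof. by move=> kn; rewrite /xbit kn. Qed.

Lemma xbit_virtual I j : ~~ (0 < j <= n)%N -> xbit I j = (j %% 4 == 0)%N.
Proof. by move=> /negbTE out; rewrite /xbit out. Qed.

Lemma upper_cover_in_peak I (q : 'I_n) : (q %% 4 = 1)%N -> upper_cover_in I q = false.
Proof.
have := ltn_ord q => qn q1; rewrite upper_cover_inE !ascends_all2; lia.
Qed.

Lemma lower_covers_in_valley I (q : 'I_n) : (q %% 4 = 3)%N -> lower_covers_in I q.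
Proof.
have := ltn_ord q => qn q3; rewrite lower_covers_inE !ascends_all2; lia.
Qed.

Lemma covers_in_ascending I (q : 'I_n) : (q %% 4 = 0)%N ->
  lower_covers_in I q = xbit I q /\ upper_cover_in I q = xbit I q.+2.
Proof.
have := ltn_ord q => qn q0.
rewrite lower_covers_inE upper_cover_inE !ascends_all2; try lia.
split.
- case: (posnP q) => [->|q_gt0]; first by rewrite xbit_virtual //; lia.
  by rewrite -[in xbit _ _](prednK q_gt0) xbit_mem; lia.
- have [q1n|nq1] := ltnP q.+1 n; first by rewrite xbit_mem //; lia.
  by rewrite xbit_virtual ?(memn_out I nq1) //; lia.
Qed.

Lemma covers_in_descending I (q : 'I_n) : (q %% 4 = 2)%N ->
  lower_covers_in I q = xbit I q.+2 /\ upper_cover_in I q = xbit I q.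
Proof.
have := ltn_ord q => qn q2.
rewrite lower_covers_inE upper_cover_inE !ascends_all2; try lia.
split.
- have [q1n|nq1] := ltnP q.+1 n; first by rewrite xbit_mem //; lia.
  by rewrite xbit_virtual //; lia.
- have q_gt0 : (0 < q)%N by lia.
  by rewrite -[in xbit _ _](prednK q_gt0) xbit_mem; lia.
Qed.

Local Open Scope ring_scope.
Local Notation chi := (@chi alpha R).
Local Notation Tq := (@Tq alpha R).

(* With 0-based indices, [q = 1 mod 4] are the peaks and [q = 3 mod 4] the valleys. *)
Definition toggle_coef (k : nat) : R :=
  if (k %% 4 == 1)%N then 0 else if (k %% 4 == 3)%N then -1 else - 2^-1.

(* Of [x_p] and [x_(p+1)] exactly one is a peak or a valley; the potential is half its
   extended membership, signed so that [chi_sub_toggle_coef_all2] below telescopes. *)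
Definition potential (I : {set 'I_n}) (p : nat) : R :=
  (if (p %% 4 < 2)%N then -1 else 1) * (xbit I (if odd p then p.+1 else p))%:R / 2.

Lemma chi_sub_toggle_coef_all2 I (q : 'I_n) : is_ideal I ->
  chi q I - toggle_coef q * Tq q I = potential I q.+1 - potential I q + (4 %| q.+1)%:R.
Proof.
move=> idI; rewrite /toggle_coef /potential /dvdn.
have := ltn_mod q 4; case E: (q %% 4)%N => [|[|[|[|r]]]] // _.
- have [E1 q_even] : (q.+1 %% 4 = 1)%N /\ odd q = false by lia.
  have [low up] := covers_in_ascending I E.
  have := @chi_add_halfTq alpha R I q idI; rewrite low up E1 /= q_even /=.
  lra.
- have [E1 q_odd] : (q.+1 %% 4 = 2)%N /\ odd q = true by lia.
  have peak : chi q I = (q \in I)%:R.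
    by rewrite chiE in_max_covers // upper_cover_in_peak // andbT.
  rewrite E1 /= q_odd /= xbit_mem ?memn_val // peak.
  lra.
- have [E1 q_even] : (q.+1 %% 4 = 3)%N /\ odd q = false by lia.
  have [low up] := covers_in_descending I E.
  have := @chi_add_halfTq alpha R I q idI; rewrite low up E1 /= q_even /=.
  lra.
- have [E1 q_odd] : (q.+1 %% 4 = 0)%N /\ odd q = true by lia.
  have valley : chi q I + Tq q I = (q \notin I)%:R.
    by rewrite chiE TqE in_min_compl_covers // lower_covers_in_valley // andbT addrC subrK.
  rewrite E1 /= q_odd /= xbit_mem ?memn_val //.
  by move: valley; case: (q \in I) => /=; lra.
Qed.

Lemma fequiv_chi_total_all2 : fequiv (chi_total R (alpha:=alpha)) (fun=> t%:R / 2).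
Proof.
exists toggle_coef => I idI.
have n_odd : odd n by rewrite fn_all2; lia.
have xbit_end : xbit I n.+1 = ~~ odd t.
  by rewrite xbit_virtual ?ltnn ?andbF // fn_all2; lia.
have n_mod : (n %% 4 < 2)%N = odd t by rewrite fn_all2; lia.
have sum_excess : \sum_(q : 'I_n) (chi q I - toggle_coef q * Tq q I) = t%:R / 2.
  rewrite (eq_bigr _ (fun q _ => chi_sub_toggle_coef_all2 q idI)) big_split /=.
  rewrite -(big_mkord xpredT (fun k => potential I k.+1 - potential I k)) telescope_sumr //.
  rewrite -(big_mkord xpredT (fun k => (4 %| k.+1)%:R)) sum_dvdn_succ //.
  rewrite /potential n_odd /= xbit_end n_mod.
  have [t_odd|t_even] := boolP (odd t).
  - have tE : t = (2 * (n %/ 4) + 1)%N by rewrite fn_all2; lia.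
    by rewrite [in RHS]tE natrD natrM /=; lra.
  - have tE : t = (2 * (n %/ 4) + 2)%N by rewrite fn_all2; lia.
    by rewrite [in RHS]tE natrD natrM /=; lra.
by move: sum_excess; rewrite sumrB /chi_total; lra.
Qed.

End AllTwo.

Local Open Scope ring_scope.

Theorem corollary3p2 (R : realType) (alpha : seq nat) :
  (2 <= size alpha)%N ->
  all (fun a => 0 < a)%N alpha ->
  (2 <= head 0 alpha)%N ->
  (2 <= last 0 alpha)%N ->
  (forall (i : nat) (x y : 'I_(fn alpha)),
      (1 <= i <= size alpha)%N ->
      in_bseg alpha i (val x).+1 -> in_bseg alpha i (val y).+1 ->
      fequiv (fun I => chi R x I - chi R y I) (fun _ => 0))
  /\
  (all (fun a => a == 2)%N alpha ->
      fequiv (chi_total R (alpha:=alpha)) (fun _ => (size alpha)%:R / 2)).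
Proof.
move=> t_ge2 _ _ _; split.
- move=> i x y i_range x_in y_in; apply: fequiv_sub0.
  by apply: (fequiv_chi_bseg R i_range); [exact x_in | exact y_in].
- by move=> all2; exact: fequiv_chi_total_all2 R all2 (ltnW t_ge2).
Qed.
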